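(* Let $\tau\in(0,1]$ and suppose that $\alpha=(2/k)^{1/((2-\tau)d)}$ (in addition to $\alpha=2^{-r}$ for a positive integer $r$). Let $p$ be a positive integer. Then, under the Fast-Filter model described in the context, $$\mathbb{E}\Big[\sum_{i=1}^k|S_i|\Big]=2^{1/(2-\tau)}\,N\,k^{1-1/(2-\tau)}=O\big(Nk^{1-1/(2-\tau)}\big),$$ and, for every $i\in[k]$, $$\frac{k}{p}\,\big(\mathbb{E}[|S_i|]\big)^2=O\big(N^2k^{1-2/(2-\tau)}/p\big).$$
   Context: Let $G=(U,V,E)$ be a bipartite graph with $|U|=M$ and $|V|=N$. For $v\in V$ let $\Gamma(v)\subseteq U$ be its set of neighbours, and assume $|\Gamma(v)|=d\ge 1$ for every $v\in V$. Let $k=2^{m}$ and $\alpha=2^{-r}$, where $m,r$ are positive integers. Identify $[k]=\{1,\dots,k\}$ bijectively with the vector space $\mathrm{GF}(2)^m$ (for instance via the binary representation of $i-1$). Fast-Filter model: for each $u\in U$, independently draw a uniformly random matrix $A'_u\in\mathrm{GF}(2)^{r\times m}$ and a uniformly random vector $b'_u\in\mathrm{GF}(2)^{r}$; all of these are mutually independent. For $v\in V$, let $A^v$ be the $(dr)\times m$ matrix obtained by stacking the matrices $A'_u$, $u\in\Gamma(v)$, in a fixed order, and let $b^v\in\mathrm{GF}(2)^{dr}$ be obtained by stacking the $b'_u$, $u\in\Gamma(v)$, in the same order. For $i\in[k]$ (viewed as a vector in $\mathrm{GF}(2)^m$), the survival set is $S_i=\{v\in V: A^v i+b^v=0\}$,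 with arithmetic over $\mathrm{GF}(2)$. *)

From HB Require Import structures.
From mathcomp Require Import all_boot all_order all_algebra.
From Stdlib Require Import Reals.
Set Implicit Arguments. Unset Strict Implicit. Unset Printing Implicit Defensive.

(* U = 'I_M, V = 'I_N; GF(2) = 'F_2.  [k] with k = 2^m is identified with
   GF(2)^m, i.e. column vectors 'cV['F_2]_m. *)

(* One outcome of the Fast-Filter randomness: for every u in U a pair
   (A'_u, b'_u) with A'_u in GF(2)^{r x m}, b'_u in GF(2)^r.  The model draws
   all of these uniformly and independently, i.e. the outcome is uniform on
   this finite type. *)
Definition outcome (M r m : nat) : finType :=
  {ffun 'I_M -> 'M['F_2]_(r, m) * 'cV['F_2]_r}.

(* A^v i + b^v = 0, where A^v, b^v stack the blocks A'_u, b'_u (u in Gamma(v)):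
   a stacked vector is zero iff each of its blocks is zero. *)
Local Open Scope ring_scope.
Definition survives (M N r m : nat) (Gam : 'I_N -> {set 'I_M})
  (w : outcome M r m) (i : 'cV['F_2]_m) (v : 'I_N) : bool :=
  [forall u in Gam v, ((w u).1 *m i + (w u).2 == 0)].
Local Close Scope ring_scope.

Definition Sset (M N r m : nat) (Gam : 'I_N -> {set 'I_M})
  (w : outcome M r m) (i : 'cV['F_2]_m) : {set 'I_N} :=
  [set v | survives Gam w i v].

Definition E_sum_S (M N r m : nat) (Gam : 'I_N -> {set 'I_M}) : R :=
  (INR (\sum_(w : outcome M r m) \sum_(i : 'cV['F_2]_m) #|Sset Gam w i|)
   / INR #|outcome M r m|)%R.

Definition E_S (M N r m : nat) (Gam : 'I_N -> {set 'I_M}) (i : 'cV['F_2]_m) : R :=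
  (INR (\sum_(w : outcome M r m) #|Sset Gam w i|) / INR #|outcome M r m|)%R.

From HB Require Import structures.
From mathcomp Require Import all_boot all_order all_algebra.
From Stdlib Require Import Reals Lra.

(* For fixed i and v, a block (A'_u, b'_u) satisfies A'_u i + b'_u = 0 for
   exactly one b'_u per A'_u, i.e. with probability 2^-r, independently over the
   d neighbours u of v; so v survives with probability alpha^d, giving
   E|S_i| = N alpha^d and E(sum_i |S_i|) = k N alpha^d.  The hypothesis on
   alpha makes alpha^d = (2/k)^(1/(2-tau)), and the constant in the second
   bound is 2^(2/(2-tau)) <= 4. *)

Set Implicit Arguments. Unset Strict Implicit.
Import GRing.Theory.

Lemma card_ffun_constrained (I T : finType) (S : {pred I}) (P : {pred T}) :
  #|[set f : {ffun I -> T} | [forall x in S, f x \in P]]|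
  = \prod_(x : I) (if x \in S then #|P| else #|T|).
Proof.
pose F x := if x \in S then P else predT.
have -> : #|[set f : {ffun I -> T} | [forall x in S, f x \in P]]|
          = #|finfun.family F|.
  apply: eq_card => f; rewrite inE; apply/forall_inP/familyP => [fP x|fF x xS].
    by rewrite /F; case: ifP => // /fP.
  by have := fF x; rewrite /F xS.
rewrite card_family foldrE big_image; apply: eq_bigr => x _.
by rewrite /F; case: ifP => //; rewrite cardT.
Qed.

Lemma sum_card_transpose (A B : finType) (rel : A -> B -> bool) :
  \sum_(a : A) #|[set b | rel a b]| = \sum_(b : B) #|[set a | rel a b]|.
Proof.
under eq_bigr => a _ do rewrite -sum1dep_card big_mkcond /=.
under [RHS]eq_bigr => b _ do rewrite -sum1dep_card big_mkcond /=.
exact: exchange_big.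
Qed.

Section AffineKernel.

Local Open Scope ring_scope.

Variables (R : finNzRingType) (r m : nat).

Definition affine_kernel (i : 'cV[R]_m) : pred ('M[R]_(r, m) * 'cV[R]_r) :=
  [pred Ab | Ab.1 *m i + Ab.2 == 0].

Lemma card_affine_kernel (i : 'cV[R]_m) :
  #|affine_kernel i| = #|{: 'M[R]_(r, m)}|.
Proof.
pose f (A : 'M[R]_(r, m)) := (A, - (A *m i)).
have f_inj : injective f by move=> A B [].
rewrite -cardsT -(card_imset setT f_inj); apply: eq_card => -[A b] /=.
apply/eqP/imsetP => [Aib0|[A' _ [-> ->]]]; last by rewrite subrr.
by exists A => //; rewrite /f (addr0_eq Aib0).
Qed.

End AffineKernel.

Lemma INR_expn (a n : nat) : INR (expn a n) = (INR a ^ n)%R.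
Proof. by elim: n => [|n IHn] //; rewrite expnS mult_INR IHn. Qed.

Lemma INR_div_eq (s o n x : nat) :
  (0 < o)%N -> (0 < x)%N -> s * x = n * o -> (INR s / INR o = INR n / INR x)%R.
Proof.
move=> /ltP/lt_0_INR o_gt0 /ltP/lt_0_INR x_gt0 /(congr1 INR).
rewrite !mult_INR => sx_no.
have -> : INR s = (INR n * INR o / INR x)%R by rewrite -sx_no; field; lra.
by field; lra.
Qed.

Section FastFilter.

(* Stdlib's Reals rebinds [^] on nat to [Nat.pow]; restore [expn] locally. *)
Import ssrnat.

Variables (M N r m : nat) (Gam : 'I_N -> {set 'I_M}).

Lemma card_cV_F2 n : #|{: 'cV['F_2]_n}| = 2 ^ n.
Proof. by rewrite card_mx card_Fp // muln1. Qed.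

Lemma card_survives (i : 'cV['F_2]_m) (v : 'I_N) :
  #|[set w : outcome M r m | survives Gam w i v]| * (2 ^ r) ^ #|Gam v|
  = #|{: outcome M r m}|.
Proof.
have -> : [set w : outcome M r m | survives Gam w i v]
          = [set w : outcome M r m | [forall u in Gam v, w u \in affine_kernel i]]
  by [].
rewrite card_ffun_constrained card_affine_kernel card_ffun card_prod card_cV_F2.
rewrite -prod_nat_const (big_mkcond (mem (Gam v))) -big_split -[RHS]prod_nat_const /=.
by apply: eq_big => // u _; case: ifP; rewrite ?muln1.
Qed.

Lemma card_outcome_gt0 : 0 < #|{: outcome M r m}|.
Proof.
by rewrite card_ffun expn_gt0 card_prod muln_gt0 card_cV_F2 card_mx card_Fp // !expn_gt0.
Qed.

Variable d : nat.
Hypothesis Gam_regular : forall v, #|Gam v| = d.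

Lemma sum_card_Sset (i : 'cV['F_2]_m) :
  (\sum_(w : outcome M r m) #|Sset Gam w i|) * (2 ^ r) ^ d = N * #|{: outcome M r m}|.
Proof.
rewrite (sum_card_transpose (fun w v => survives Gam w i v)) big_distrl /=.
rewrite (eq_bigr (fun=> #|{: outcome M r m}|)) => [|v _].
  by rewrite sum_nat_const card_ord.
by rewrite -(Gam_regular v) card_survives.
Qed.

Lemma sum_sum_card_Sset :
  (\sum_(w : outcome M r m) \sum_(i : 'cV['F_2]_m) #|Sset Gam w i|) * (2 ^ r) ^ d
  = 2 ^ m * N * #|{: outcome M r m}|.
Proof.
rewrite exchange_big big_distrl /=.
by rewrite (eq_bigr _ (fun i _ => sum_card_Sset i)) sum_nat_const card_cV_F2 mulnA.
Qed.

Lemma E_S_eq (i : 'cV['F_2]_m) : @E_S M N r m Gam i = (INR N * ((/ 2) ^ r) ^ d)%R.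
Proof.
rewrite /E_S (INR_div_eq card_outcome_gt0 _ (sum_card_Sset i)) ?expn_gt0 //.
by rewrite !INR_expn !pow_inv.
Qed.

Lemma E_sum_S_eq : @E_sum_S M N r m Gam = (INR 2 ^ m * INR N * ((/ 2) ^ r) ^ d)%R.
Proof.
rewrite /E_sum_S (INR_div_eq card_outcome_gt0 _ sum_sum_card_Sset) ?expn_gt0 //.
by rewrite mult_INR !INR_expn !pow_inv.
Qed.

End FastFilter.

Lemma Rpower_div_scale (c K b : R) :
  (0 < c)%R -> (0 < K)%R -> (K * Rpower (c / K) b = Rpower c b * Rpower K (1 - b))%R.
Proof.
move=> c_gt0 K_gt0.
rewrite /Rpower /Rdiv ln_mult ?ln_Rinv //; last exact: Rinv_0_lt_compat.
by rewrite -{1}(exp_ln K) // -!exp_plus; f_equal; ring.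
Qed.

Lemma pow_Rpower (x b : R) (n : nat) :
  (0 < x)%R -> (Rpower x b ^ n = Rpower x (INR n * b))%R.
Proof.
by move=> x_gt0; rewrite -Rpower_pow ?Rpower_mult ?[(b * _)%R]Rmult_comm //; apply: exp_pos.
Qed.

Lemma scaled_square_le (K N p tau : R) :
  (0 < K)%R -> (0 < tau)%R -> (tau <= 1)%R -> (0 < p)%R ->
  (K / p * (N * Rpower (2 / K) (1 / (2 - tau))) ^ 2
   <= 4 * (N ^ 2 * Rpower K (1 - 2 / (2 - tau)) / p))%R.
Proof.
move=> K_gt0 tau_gt0 tau_le1 p_gt0.
have scale2 : (K * Rpower (2 / K) (1 / (2 - tau)) ^ 2
               = Rpower 2 (2 / (2 - tau)) * Rpower K (1 - 2 / (2 - tau)))%R.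
  rewrite pow_Rpower ?Rpower_div_scale; try lra; last by apply: Rdiv_lt_0_compat; lra.
  by have -> : (INR 2 * (1 / (2 - tau)) = 2 / (2 - tau))%R by simpl; field; lra.
have two_pow_le4 : (Rpower 2 (2 / (2 - tau)) <= 4)%R.
  rewrite (_ : 4 = Rpower 2 (INR 2))%R; last by rewrite Rpower_pow; simpl; lra.
  apply: Rle_Rpower; first lra.
  apply: (Rmult_le_reg_r (2 - tau)); first lra.
  by rewrite /Rdiv Rmult_assoc Rinv_l; simpl; lra.
have N2p_ge0 : (0 <= N ^ 2 / p)%R.
  by apply: Rmult_le_pos; [apply: pow2_ge_0 | left; apply: Rinv_0_lt_compat].
have Kpow_ge0 : (0 <= Rpower K (1 - 2 / (2 - tau)))%R by left; apply: exp_pos.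
rewrite (_ : K / p * (N * Rpower (2 / K) (1 / (2 - tau))) ^ 2
             = N ^ 2 / p * (K * Rpower (2 / K) (1 / (2 - tau)) ^ 2))%R; last by field; lra.
rewrite scale2 (_ : 4 * (N ^ 2 * Rpower K (1 - 2 / (2 - tau)) / p)
                   = N ^ 2 / p * (4 * Rpower K (1 - 2 / (2 - tau))))%R;
  last by field; lra.
by apply: Rmult_le_compat_l => //; apply: Rmult_le_compat_r.
Qed.

Theorem mainTheorem7 :
  exists C : R,
  forall (M N d m r p : nat) (Gam : 'I_N -> {set 'I_M}) (tau : R),
    (0 < tau <= 1)%R ->
    (0 < d)%N -> (0 < m)%N -> (0 < r)%N -> (0 < p)%N ->
    (forall v : 'I_N, #|Gam v| = d) ->
    ((/ 2) ^ r = Rpower (2 / INR (2 ^ m)) (1 / ((2 - tau) * INR d)))%R ->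
    (@E_sum_S M N r m Gam
       = Rpower 2 (1 / (2 - tau)) * INR N * Rpower (INR (2 ^ m)) (1 - 1 / (2 - tau)))%R
    /\
    (forall i : 'cV['F_2]_m,
       INR (2 ^ m) / INR p * (@E_S M N r m Gam i) ^ 2
       <= C * (INR N ^ 2 * Rpower (INR (2 ^ m)) (1 - 2 / (2 - tau)) / INR p))%R.
Proof.
exists 4%R => M N d m r p Gam tau [tau_gt0 tau_le1] /ltP/lt_0_INR d_gt0 _ _
  /ltP/lt_0_INR p_gt0 Gam_regular alpha_r.
set K := INR (2 ^ m) in alpha_r *; set a := (1 / (2 - tau))%R.
have K_pow : (INR 2 ^ m)%R = K by rewrite /K pow_INR.
have K_gt0 : (0 < K)%R by rewrite -K_pow; apply: pow_lt; simpl; lra.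
have alpha_d : (((/ 2) ^ r) ^ d = Rpower (2 / K) a)%R.
  rewrite alpha_r pow_Rpower; last by apply: Rdiv_lt_0_compat; lra.
  by f_equal; rewrite /a; field; lra.
split.
  rewrite (E_sum_S_eq r m Gam_regular) K_pow alpha_d.
  by rewrite [(K * _)%R]Rmult_comm Rmult_assoc Rpower_div_scale //; [ring | lra].
move=> i; rewrite (E_S_eq r Gam_regular) alpha_d.
exact: scaled_square_le K_gt0 tau_gt0 tau_le1 p_gt0.
Qed.
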